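(* For every $n\ge1$, the number of layers on $n$ channels that are in last layer normal form is $P_{n+5}$, where $(P_m)$ is the Padovan sequence defined by $P_0=1$, $P_1=P_2=0$ and $P_{m+3}=P_m+P_{m+1}$.
   Context: Channels are numbered $1,\ldots,n$. A layer on $n$ channels is a set of comparators $(i,j)$ with $1\le i<j\le n$ such that each channel occurs in at most one comparator of the layer. A channel is used in a layer if it occurs in some comparator of that layer. A layer is in last layer normal form if (i) every comparator in it is of the form $(i,i+1)$, and (ii) there is no $i$ with $1\le i<n$ such that both channels $i$ and $i+1$ are unused in the layer. *)

From mathcomp Require Import all_boot.
Set Implicit Arguments. Unset Strict Implicit. Unset Printing Implicit Defensive.

(* Channels 1..n are represented by 'I_n (channel k+1 <-> ordinal k).
   A comparator (i,j) is a pair in 'I_n * 'I_n; a layer is a finite set of them. *)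

Definition comparator (n : nat) := ('I_n * 'I_n)%type.

Definition occurs (n : nat) (k : 'I_n) (c : comparator n) : bool :=
  (c.1 == k) || (c.2 == k).

Definition is_layer (n : nat) (A : {set comparator n}) : bool :=
  [forall c in A, c.1 < c.2] &&
  [forall k : 'I_n, forall c in A, forall d in A,
     (occurs k c && occurs k d) ==> (c == d)].

Definition used (n : nat) (A : {set comparator n}) (k : 'I_n) : bool :=
  [exists c in A, occurs k c].

Definition last_layer_nf (n : nat) (A : {set comparator n}) : bool :=
  [forall c in A, (c.2 : nat) == (c.1 : nat).+1] &&
  [forall i : 'I_n, forall j : 'I_n,
     ((j : nat) == (i : nat).+1) ==> (used A i || used A j)].

Fixpoint padovan (m : nat) : nat :=
  match m with
  | 0 => 1
  | 1 => 0
  | 2 => 0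
  | (k.+1 as k1).+2 => padovan k + padovan k1
  end.

From mathcomp Require Import all_boot zify.
Set Implicit Arguments. Unset Strict Implicit. Unset Printing Implicit Defensive.

(* A layer in last layer normal form contains only comparators (i, i+1), so it is
   determined by the bit word s recording which of them occur. Channel k is used iff
   bit k-1 or bit k is set; hence, for the padded word t = 0 s 0, the layer condition
   says that t has no two adjacent ones and the normal form condition says that t has
   no three consecutive zeros. Counting such words with an automaton whose state is
   the last two letters, the three live states a, b, c (last letters 10, 01, 00)
   satisfy a' = b + c, b' = a, c' = b: the Padovan recurrence. *)

Fixpoint bitseqs (m : nat) : seq bitseq :=
  if m is m'.+1 then [seq true :: s | s <- bitseqs m'] ++ [seq false :: s | s <- bitseqs m']
  else [:: [::]].

Lemma mem_bitseqs m s : (s \in bitseqs m) = (size s == m).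
Proof.
elim: m s => [|m IH] [|b s] //=; rewrite mem_cat.
  by apply/orP=> -[] /mapP[].
have cons_inj (c : bool) : injective (cons c) by move=> ? ? [].
have cons_mismatch c : (~~ c :: s \in [seq c :: r | r <- bitseqs m]) = false.
  by apply/mapP=> -[? _ []]; case: c.
case: b; rewrite ?(cons_mismatch true) ?(cons_mismatch false) ?orbF.
  by rewrite (mem_map (cons_inj _)) IH.
by rewrite (mem_map (cons_inj _)) IH.
Qed.

Lemma uniq_bitseqs m : uniq (bitseqs m).
Proof.
elim: m => //= m IH; have cons_inj (c : bool) : injective (cons c) by move=> ? ? [].
rewrite cat_uniq !map_inj_uniq // IH andbT /=.
by apply/hasPn=> _ /mapP[s _ ->]; apply/mapP=> -[].
Qed.

Lemma count_bitseqsS (p : pred bitseq) m : count p (bitseqs m.+1) =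
  count (fun s => p (true :: s)) (bitseqs m) + count (fun s => p (false :: s)) (bitseqs m).
Proof. by rewrite /= count_cat !count_map. Qed.

(* The last window may run one letter past the end of t, where nth reads false. *)
Definition nf_word (t : bitseq) : Prop :=
  (forall k, ~~ (nth false t k && nth false t k.+1)) /\
  (forall k, k.+1 < size t -> [|| nth false t k, nth false t k.+1 | nth false t k.+2]).

Lemma nf_word_cons x t : nf_word (x :: t) <->
  [/\ ~~ (x && nth false t 0), 0 < size t -> [|| x, nth false t 0 | nth false t 1]
    & nf_word t].
Proof.
split=> [[no11 no000] | [no11x no000x [no11 no000]]].
  split; [exact: (no11 0) | exact: (no000 0) | split=> k].
    exact: (no11 k.+1).
  exact: (no000 k.+1).
by split=> [[|k] | [|k] hk] //; [exact: no11 | exact: no000x | exact: no000].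
Qed.

Fixpoint nf_wordb (x y : bool) (s : bitseq) : bool :=
  if s is z :: r then [&& ~~ (x && y), [|| x, y | z] & nf_wordb y z r]
  else ~~ (x && y) && (x || y).

Lemma nf_wordbP x y s : nf_wordb x y s <-> nf_word [:: x, y & s].
Proof.
elim: s x y => [|z r IH] x y.
  split=> [/andP[no11 no000] | [no11 no000]].
    by split=> [[|[|k]] | [|k] hk] //=; rewrite ?andbF ?orbF.
  by rewrite /= (no11 0); have := no000 0 isT; rewrite /= orbF.
split=> [/and3P[no11 no000 /IH nf] | /nf_word_cons[no11 /(_ isT) no000 /IH nf]].
  by apply/nf_word_cons.
exact/and3P.
Qed.

Definition nf_count m x y := count (nf_wordb x y) (bitseqs m).

Lemma nf_count_true_true m : nf_count m true true = 0.
Proof. by rewrite /nf_count (eq_count (a2 := pred0)) ?count_pred0 // => -[]. Qed.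

Lemma nf_count_padovan m :
  [/\ nf_count m true false = padovan (m + 6), nf_count m false true = padovan (m + 5)
    & nf_count m false false = padovan (m + 4)].
Proof.
elim: m => [|m [IHtf IHft IHff]]; first by [].
move: IHtf IHft IHff (nf_count_true_true m).
rewrite /nf_count !count_bitseqsS /= count_pred0 => -> -> -> ->.
by rewrite !addnS !addn0 /= addnC.
Qed.

Lemma nf_wordb_true_false s : nf_wordb true false s <-> nf_word (false :: s).
Proof.
split=> [/nf_wordbP/nf_word_cons[] // | nf].
by apply/nf_wordbP/nf_word_cons; split.
Qed.

Lemma nth_true_lt_size (s : bitseq) k : nth false s k -> k < size s.
Proof. by apply: contraTT; rewrite -leqNgt => /(nth_default false) ->. Qed.

Lemma occursE n k (c : comparator n) : occurs k c = ((c.1 : nat) == k) || ((c.2 : nat) == k).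
Proof. by []. Qed.

Lemma comparator_val_inj n (c d : comparator n) :
  (c.1 : nat) = d.1 -> (c.2 : nat) = d.2 -> c = d.
Proof. by case: c d => [i j] [i' j'] /= /val_inj-> /val_inj->. Qed.

Section LayerOfBits.

Variable m : nat.
Local Notation n := m.+1.

Definition layer_of_bits (s : bitseq) : {set comparator n} :=
  [set c : comparator n | ((c.2 : nat) == c.1.+1) && nth false s c.1].

Definition bits_of_layer (A : {set comparator n}) : bitseq :=
  mkseq (fun i => ((inord i, inord i.+1) : comparator n) \in A) m.

Lemma layer_of_bitsK s : size s = m -> bits_of_layer (layer_of_bits s) = s.
Proof.
move=> size_s; apply: (@eq_from_nth _ false); rewrite size_mkseq ?size_s // => i lt_i_m.
by rewrite nth_mkseq // inE /= !inordK ?eqxx //; lia.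
Qed.

Lemma bits_of_layerK (A : {set comparator n}) : [forall c in A, (c.2 : nat) == c.1.+1] ->
  layer_of_bits (bits_of_layer A) = A.
Proof.
move/forall_inP=> adjA; apply/setP=> -[i j]; rewrite inE /=.
have [j_eq | ne_j] := eqVneq (j : nat) i.+1; last first.
  by apply/esym/negbTE; apply: contra ne_j => /adjA.
have lt_i_m : i < m by have := ltn_ord j; lia.
rewrite nth_mkseq //= inord_val; congr ((_, _) \in A).
by apply: val_inj; rewrite /= inordK ?j_eq.
Qed.

Lemma used_layer_of_bits s (k : 'I_n) : size s <= m ->
  used (layer_of_bits s) k = nth false (false :: s) k || nth false s k.
Proof.
move=> size_s; apply/existsP/idP => [[c /andP[]] | /orP[]].
- rewrite inE => /andP[/eqP c2 s_c1] /orP[] /eqP <-; first by rewrite s_c1 orbT.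
  by rewrite c2 /= s_c1.
- case: k => -[|k] lt_k //= s_k; exists (inord k, Ordinal lt_k).
  by rewrite inE /= /occurs inordK ?eqxx ?orbT ?s_k //; lia.
- move=> s_k; have lt_k_m : k < m.
    exact: leq_trans (nth_true_lt_size s_k) size_s.
  exists (k, inord k.+1); rewrite inE /= /occurs inordK ?eqxx ?s_k //; lia.
Qed.

Lemma is_layer_layer_of_bits s : size s <= m ->
  is_layer (layer_of_bits s) <-> forall k, ~~ (nth false s k && nth false s k.+1).
Proof.
move=> size_s; split=> [/andP[_ /forallP disj] k | no11].
  apply/negP=> /andP[s_k s_k1]; have := nth_true_lt_size s_k1 => lt_k1.
  set c : comparator n := (inord k, inord k.+1).
  set d : comparator n := (inord k.+1, inord k.+2).
  have c_in : c \in layer_of_bits s by rewrite inE /= !inordK ?eqxx ?s_k //; lia.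
  have d_in : d \in layer_of_bits s by rewrite inE /= !inordK ?eqxx ?s_k1 //; lia.
  move: (disj (inord k.+1)) => /forall_inP/(_ c c_in)/forall_inP/(_ d d_in).
  by rewrite /occurs !eqxx orbT /= => /eqP[] /(congr1 val); rewrite /= !inordK //; lia.
apply/andP; split.
  by apply/forall_inP=> c; rewrite inE => /andP[/eqP-> _].
apply/forallP=> k; apply/forall_inP=> -[i j]; rewrite inE /= => /andP[/eqP j_eq s_i].
apply/forall_inP=> -[i' j']; rewrite inE /= => /andP[/eqP j'_eq s_i'].
rewrite !occursE /=; apply/implyP=> share; apply/eqP.
have [i_eq | ne_i] := eqVneq (i : nat) i'.
  by apply: comparator_val_inj; rewrite //= j_eq j'_eq i_eq.
have [i'_eq | i_eq] : i' = i.+1 :> nat \/ i = i'.+1 :> nat.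
  by case/andP: share => /orP[] /eqP ? /orP[] /eqP ?; lia.
  by have := no11 i; rewrite s_i -i'_eq s_i'.
by have := no11 i'; rewrite s_i' -i_eq s_i.
Qed.

Lemma last_layer_nf_layer_of_bits s : size s <= m ->
  last_layer_nf (layer_of_bits s) <->
  forall k, k.+1 < n -> [|| nth false (false :: s) k, nth false s k | nth false s k.+1].
Proof.
move=> size_s; have adjacent : [forall c in layer_of_bits s, (c.2 : nat) == c.1.+1].
  by apply/forall_inP=> c; rewrite inE => /andP[].
have orbE a b c : (a || b) || (b || c) = [|| a, b | c] by case: a; case: b.
rewrite /last_layer_nf adjacent andTb; split=> [/forallP cover k lt_k | cover].
  move: (cover (inord k)) => /forallP/(_ (inord k.+1)).
  rewrite !inordK ?eqxx //=; last lia.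
  by rewrite !(used_layer_of_bits _ size_s) !inordK //= ?orbE; lia.
apply/forallP=> i; apply/forallP=> j; apply/implyP=> /eqP j_eq.
by rewrite !used_layer_of_bits // j_eq /= orbE; apply: cover; rewrite -j_eq.
Qed.

Lemma llnf_layer_of_bits s : size s = m ->
  is_layer (layer_of_bits s) && last_layer_nf (layer_of_bits s) <-> nf_word (false :: s).
Proof.
move=> size_s; have size_s' : size s <= m by rewrite size_s.
split=> [/andP[layer llnf] | [no11 cover]].
  have /is_layer_layer_of_bits-/(_ size_s') no11 := layer.
  have /last_layer_nf_layer_of_bits-/(_ size_s') cover := llnf.
  split=> [[|k] // | k]; first exact: no11.
  by rewrite /= size_s; apply: cover.
apply/andP; split.
  by apply/is_layer_layer_of_bits => // k; apply: (no11 k.+1).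
by apply/last_layer_nf_layer_of_bits => // k; rewrite -size_s; apply: cover.
Qed.

Definition nf_words := [seq s <- bitseqs m | nf_wordb true false s].

Lemma mem_nf_words s : (s \in nf_words) = (size s == m) && nf_wordb true false s.
Proof. by rewrite mem_filter mem_bitseqs andbC. Qed.

Lemma llnf_layersE :
  [set A : {set comparator n} | is_layer A && last_layer_nf A] =i map layer_of_bits nf_words.
Proof.
move=> A; rewrite inE; apply/idP/mapP=> [llnf | [s]].
  have A_eq : layer_of_bits (bits_of_layer A) = A.
    by apply: bits_of_layerK; case/andP: llnf => _ /andP[].
  exists (bits_of_layer A); last by rewrite A_eq.
  rewrite mem_nf_words size_mkseq eqxx; apply/nf_wordb_true_false/llnf_layer_of_bits.
    by rewrite size_mkseq.
  by rewrite A_eq.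
rewrite mem_nf_words => /andP[/eqP size_s /nf_wordb_true_false nf] ->.
exact/llnf_layer_of_bits.
Qed.

Lemma uniq_llnf_layers : uniq (map layer_of_bits nf_words).
Proof.
rewrite map_inj_in_uniq ?filter_uniq ?uniq_bitseqs //.
apply: (can_in_inj (g := bits_of_layer)) => s.
by rewrite mem_nf_words => /andP[/eqP /layer_of_bitsK].
Qed.

End LayerOfBits.

Theorem theorem3 (n : nat) (hn : 1 <= n) :
  #|[set A : {set comparator n} | is_layer A && last_layer_nf A]| = padovan (n + 5).
Proof.
case: n hn => [// | m] _.
rewrite (eq_card (@llnf_layersE m)) (card_uniqP (uniq_llnf_layers m)) size_map size_filter.
by rewrite addSn -addnS; case: (nf_count_padovan m).
Qed.
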